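(* For infinitely many $n\in\mathbb{N}$ there exist matroids $M=(E,\mathcal{I})$ and $M'=(E,\mathcal{I}')$ over the same ground set $E$ with $|E|=n$, and a weight function $w:E\to\{0,1\}$, together with a vertex $x^*$ of the polytope $\{x: x\in P_B(M)\cap P_B(M'),\ w^{\mathsf T}x=1\}$, such that there is a unique common basis $B$ of $M$ and $M'$ with $w(B)=1$, and this $B$ satisfies $\|x^*-\chi(B)\|_1=\tfrac34 n$.
   Context: $P_B(M)$ denotes the base polytope of $M$ (convex hull of characteristic vectors of bases of $M$) in $\mathbb{R}^E$; $\chi(B)$ is the characteristic vector of $B$; $w(S)=\sum_{e\in S}w(e)$; a common basis is a set that is a basis of both matroids. *)

From HB Require Import structures.
From mathcomp Require Import all_boot all_order all_algebra.
From mathcomp Require Import reals.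
Set Implicit Arguments. Unset Strict Implicit. Unset Printing Implicit Defensive.
Import Order.TTheory GRing.Theory Num.Theory.
Local Open Scope ring_scope.

Definition is_matroid (T : finType) (I : {set {set T}}) : Prop :=
  [/\ set0 \in I,
      (forall A B : {set T}, B \in I -> A \subset B -> A \in I) &
      (forall A B : {set T}, A \in I -> B \in I -> (#|A| < #|B|)%N ->
          exists2 e, e \in B :\: A & e |: A \in I)].

Definition is_basis (T : finType) (I : {set {set T}}) (B : {set T}) : Prop :=
  B \in I /\ (forall A : {set T}, A \in I -> B \subset A -> A = B).

Definition common_basis (T : finType) (I I' : {set {set T}}) (B : {set T}) :=
  is_basis I B /\ is_basis I' B.

Definition chi (R : realType) (T : finType) (B : {set T}) : T -> R :=
  fun e => if e \in B then 1 else 0.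

Definition wset (T : finType) (w : T -> nat) (S : {set T}) : nat :=
  (\sum_(e in S) w e)%N.

Definition in_base_polytope (R : realType) (T : finType) (I : {set {set T}})
  (x : T -> R) : Prop :=
  exists lam : {set T} -> R,
    [/\ forall S, 0 <= lam S,
        forall S, ~ is_basis I S -> lam S = 0,
        \sum_(S : {set T}) lam S = 1 &
        forall e, x e = \sum_(S : {set T}) lam S * chi R S e].

Definition in_Q (R : realType) (T : finType) (I I' : {set {set T}})
  (w : T -> nat) (x : T -> R) : Prop :=
  [/\ in_base_polytope I x, in_base_polytope I' x &
      \sum_(e : T) (w e)%:R * x e = 1].

Definition is_vertex (R : realType) (T : finType) (P : (T -> R) -> Prop)
  (x : T -> R) : Prop :=
  P x /\ (forall (y z : T -> R) (t : R), P y -> P z -> 0 < t < 1 ->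
            (forall e, x e = t * y e + (1 - t) * z e) -> y = z).

Definition l1dist (R : realType) (T : finType) (x y : T -> R) : R :=
  \sum_(e : T) `|x e - y e|.

From HB Require Import structures.
From mathcomp Require Import all_boot all_order all_algebra.
From mathcomp Require Import reals.
From mathcomp Require Import zify lra.
From Stdlib Require Import Classical FunctionalExtensionality.
Set Implicit Arguments. Unset Strict Implicit. Unset Printing Implicit Defensive.
Import Order.TTheory GRing.Theory Num.Theory.
Local Open Scope ring_scope.

(* On the ground set {0, ..., 4k-1}, let M and M' be the partition matroids whose bases
   pick exactly one element of each pair {2j-1, 2j} (taken cyclically inside the halves
   [0, 2k) and [2k, 4k)), resp. of each pair {2j, 2j+1}.  The two pairings form two
   alternating cycles, so every x in both base polytopes satisfies x_e + x_f = 1 on all pairs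
   and is determined by a = x_0 and b = x_2k; the common bases are the four sets taking one
   parity class in each half.  With weight 1 on 1, 3 and 2k+1, a common basis weighs
   2 [odd in the lower half] + [odd in the upper half], so the evens of the lower half
   together with the odds of the upper half form the only common basis B of weight 1.
   On the face w^T x = 1 we have 2a + b = 2 with b <= 1, whose endpoint a = 1/2, b = 1 is
   a vertex x*; it differs from chi(B) by 1/2 on the lower half and by 1 on the upper
   half, so ||x* - chi(B)||_1 = 3k = 3n/4. *)

Section PairMatroid.

Variables (T : finType) (q : T -> T).
Hypotheses (qK : involutive q) (q_neq : forall e, q e != e).

Definition pair_indep : {set {set T}} :=
  [set A : {set T} | [forall e in A, q e \notin A]].

Lemma pair_indepP (A : {set T}) :
  reflect (forall e, e \in A -> q e \notin A) (A \in pair_indep).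
Proof. by rewrite inE; apply: (iffP forall_inP). Qed.

Lemma pair_indepU1 (A : {set T}) e :
  A \in pair_indep -> q e \notin A -> e |: A \in pair_indep.
Proof.
move=> /pair_indepP indA qeA; apply/pair_indepP => f; rewrite !inE.
case/predU1P => [-> | fA]; first by rewrite negb_or q_neq.
rewrite negb_or indA // andbT; apply: contraNneq qeA => qfe.
by rewrite -qfe qK.
Qed.

Lemma pair_indep_matroid : is_matroid pair_indep.
Proof.
split.
- by apply/pair_indepP => e; rewrite inE.
- move=> A B /pair_indepP indB sAB; apply/pair_indepP => e eA.
  by apply: contra (indB e (subsetP sAB _ eA)); apply: (subsetP sAB).
move=> A B indA /pair_indepP indB ltAB.
have [[e /andP [eBA qeA]] | noext] :=
  altP (@existsP _ (fun e => (e \in B :\: A) && (q e \notin A))).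
  by exists e => //; apply: pair_indepU1.
(* As no e in B extends A, A contains e or q e; picking it injects B into A. *)
pose g e := if e \in A then e else q e.
have gBA : {in B, forall e, g e \in A}.
  move=> e eB; rewrite /g; case: ifP => // eA.
  by move/existsPn/(_ e): noext; rewrite !inE eA eB negbK.
have g_inj : {in B &, injective g}.
  move=> e1 e2 e1B e2B; rewrite /g.
  case: ifP => e1A; case: ifP => e2A // E.
  - by move: (indB e2 e2B); rewrite -E e1B.
  - by move: (indB e1 e1B); rewrite E e2B.
  - by rewrite -(qK e1) E qK.
have : (#|g @: B| <= #|A|)%N.
  by apply/subset_leq_card/subsetP => _ /imsetP [e eB ->]; apply: gBA.
by rewrite card_in_imset // leqNgt ltAB.
Qed.

Lemma pair_basisP (S : {set T}) :
  is_basis pair_indep S <-> forall e, (e \in S) = (q e \notin S).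
Proof.
split=> [[indS maxS] e | HS].
  have [eS | eNS] := boolP (e \in S); first by move/pair_indepP/(_ e eS): indS.
  apply/esym/negbTE; apply: contra eNS => qeNS.
  by rewrite -(maxS _ (pair_indepU1 indS qeNS) (subsetUr _ _)) setU11.
split; first by apply/pair_indepP => e; rewrite HS.
move=> A /pair_indepP indA sSA; apply/eqP; rewrite eqEsubset sSA andbT.
apply/subsetP => e eA; rewrite HS; apply: contra (indA e eA); exact: (subsetP sSA).
Qed.

Lemma chi_pair_basis (R : realType) (S : {set T}) e :
  is_basis pair_indep S -> chi R S (q e) = 1 - chi R S e.
Proof.
move/pair_basisP/(_ e) => HS.
by rewrite /chi HS; case: (q e \in S); rewrite ?subr0 ?subrr.
Qed.

Lemma pair_base_polytope (R : realType) (x : T -> R) :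
  in_base_polytope pair_indep x ->
  (forall e, 0 <= x e) /\ (forall e, x (q e) = 1 - x e).
Proof.
move=> [lam [lam_ge0 lam_basis lam_sum1 xE]]; split=> e.
  by rewrite xE; apply: sumr_ge0 => S _; rewrite mulr_ge0 // /chi; case: ifP.
rewrite !xE -lam_sum1 -sumrB; apply: eq_bigr => S _.
have [Sb | Snb] := classic (is_basis pair_indep S).
  by rewrite chi_pair_basis // mulrBr mulr1.
by rewrite lam_basis // !mul0r subrr.
Qed.

End PairMatroid.

Lemma base_polytope_segment (R : realType) (T : finType) (I : {set {set T}})
    (S1 S2 : {set T}) (t : R) (x : T -> R) :
  is_basis I S1 -> is_basis I S2 -> 0 <= t <= 1 ->
  (forall e, x e = t * chi R S1 e + (1 - t) * chi R S2 e) -> in_base_polytope I x.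
Proof.
move=> S1b S2b /andP [t_ge0 t_le1] xE.
have sum_at (S0 : {set T}) (F : {set T} -> R) : \sum_S (S == S0)%:R * F S = F S0.
  rewrite (bigD1 S0) //= eqxx mul1r big1 ?addr0 // => S /negbTE ->.
  by rewrite mul0r.
exists (fun S => t * (S == S1)%:R + (1 - t) * (S == S2)%:R); split.
- by move=> S; rewrite addr_ge0 // mulr_ge0 ?subr_ge0.
- move=> S Snb; have [S1Nb S2Nb] : S != S1 /\ S != S2.
    by split; apply: contra_notN Snb => /eqP ->.
  by rewrite (negbTE S1Nb) (negbTE S2Nb) !mulr0 addr0.
- rewrite big_split /= -!mulr_sumr.
  have sum_eq1 (S0 : {set T}) : \sum_S (S == S0)%:R = 1 :> R.
    by rewrite -[RHS](sum_at S0 (fun=> 1)); apply: eq_bigr => S _; rewrite mulr1.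
  by rewrite !sum_eq1 !mulr1 addrC subrK.
- move=> e; rewrite xE.
  under eq_bigr do rewrite mulrDl -!mulrA.
  by rewrite big_split /= -!mulr_sumr !sum_at.
Qed.

Lemma sum_mem_seq (T : finType) (V : nmodType) (s : seq T) (F : T -> V) :
  uniq s -> \sum_(e : T) F e *+ (e \in s) = \sum_(e <- s) F e.
Proof.
by move=> s_uniq; under eq_bigr do rewrite mulrb; rewrite -big_mkcond -big_uniq.
Qed.

Definition pair_evenn (i : nat) : nat := if odd i then i.-1 else i.+1.

(* Pairs 2j-1 with 2j, cyclically inside each half [0, 2k) and [2k, 4k). *)
Definition pair_oddn (k i : nat) : nat :=
  (if i == 0 then (2 * k).-1 else if i == (2 * k).-1 then 0
   else if i == 2 * k then (4 * k).-1 else if i == (4 * k).-1 then 2 * k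
   else if odd i then i.+1 else i.-1)%N.

Local Ltac pairn_lia := rewrite /pair_oddn /pair_evenn; repeat case: ifP; lia.

Lemma pair_evenn_lt k i : (i < 4 * k)%N -> (pair_evenn i < 4 * k)%N.
Proof. pairn_lia. Qed.

Lemma pair_oddn_lt k i : (i < 4 * k)%N -> (pair_oddn k i < 4 * k)%N.
Proof. pairn_lia. Qed.

Lemma succn_pairn k i : (i.+1 < 4 * k)%N -> i.+1 != (2 * k)%N ->
  i.+1 = if odd i then pair_oddn k i else pair_evenn i.
Proof. pairn_lia. Qed.

Section Pairings.

Variable k : nat.
Local Notation E := 'I_(4 * k).

Definition pair_even (e : E) : E := Ordinal (pair_evenn_lt (ltn_ord e)).
Definition pair_odd (e : E) : E := Ordinal (pair_oddn_lt (ltn_ord e)).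

Definition lower (e : E) : bool := (e < 2 * k)%N.

Local Ltac ord_lia :=
  move=> [i lt_i]; rewrite ?/pair_odd ?/pair_even ?/lower -?val_eqE /=; pairn_lia.

Lemma pair_evenK : involutive pair_even.
Proof. by move=> e; apply: val_inj; move: e; ord_lia. Qed.

Lemma pair_oddK : involutive pair_odd.
Proof. by move=> e; apply: val_inj; move: e; ord_lia. Qed.

Lemma pair_even_neq e : pair_even e != e. Proof. by move: e; ord_lia. Qed.
Lemma pair_odd_neq e : pair_odd e != e. Proof. by move: e; ord_lia. Qed.
Lemma odd_pair_even e : odd (pair_even e) = ~~ odd e. Proof. by move: e; ord_lia. Qed.
Lemma odd_pair_odd e : odd (pair_odd e) = ~~ odd e. Proof. by move: e; ord_lia. Qed.

Lemma lower_pair_even e : lower (pair_even e) = lower e. Proof. by move: e; ord_lia. Qed.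
Lemma lower_pair_odd e : lower (pair_odd e) = lower e. Proof. by move: e; ord_lia. Qed.

Lemma sum_halves (V : nmodType) (a b : V) :
  \sum_(e : E) (if lower e then a else b) = (a + b) *+ (2 * k).
Proof.
rewrite /lower -(big_mkord xpredT (fun i => if (i < 2 * k)%N then a else b)).
rewrite (big_cat_nat (n := (2 * k)%N)) //=; last by lia.
rewrite (eq_big_nat _ _ (F2 := fun=> a)) => [|i /andP [_ ->] //].
rewrite [X in _ + X](eq_big_nat _ _ (F2 := fun=> b)) => [|i /andP [+ _]].
  by rewrite !sumr_const_nat subn0 (_ : 4 * k - 2 * k = 2 * k)%N ?mulrnDl //; lia.
by rewrite leqNgt => /negbTE ->.
Qed.

End Pairings.

Arguments pair_even {k} e.
Arguments pair_odd {k} e.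
Arguments pair_evenK {k}.
Arguments pair_oddK {k}.
Arguments pair_even_neq {k}.
Arguments pair_odd_neq {k}.

Section Construction.

Variables (R : realType) (k : nat).
Hypothesis k_gt1 : (1 < k)%N.
Local Notation E := 'I_(4 * k).

Fact lo_lt : (0 < 4 * k)%N. Proof. lia. Qed.
Definition lo : E := Ordinal lo_lt.
Definition pos (i : nat) : E := insubd lo i.

Lemma val_pos i : (i < 4 * k)%N -> pos i = i :> nat.
Proof. by move=> lt_i; rewrite val_insubd lt_i. Qed.

Definition hi : E := pos (2 * k)%N.
Definition start (e : E) : E := if lower e then lo else hi.

Lemma alternating (A : Type) (c : A -> A) (u : E -> A) :
  involutive c -> (forall e, u (pair_odd e) = c (u e)) ->
  (forall e, u (pair_even e) = c (u e)) ->
  forall e, u e = if odd e then c (u (start e)) else u (start e).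
Proof.
move=> cK u_odd u_even e; have [m em] : {m | e = m :> nat} by exists e.
elim: m e em => [|m IH] e em.
  have -> : e = lo by apply: val_inj.
  by rewrite /start /lower /= ifT //; lia.
have [m2k | m2k] := eqVneq m.+1 (2 * k)%N.
  have -> : e = hi by apply: val_inj; rewrite /= /hi val_pos -?m2k //; lia.
  by rewrite /start /lower /hi val_pos ?ltnn ?oddM //; lia.
have lt_m : (m < 4 * k)%N by rewrite ltnW // -em.
pose g : E := Ordinal lt_m.
have ue : u e = c (u g).
  have -> : e = if odd g then pair_odd g else pair_even g.
    by apply: val_inj; rewrite /= (fun_if val) /= em (@succn_pairn k) // -em.
  by case: (odd g); [exact: u_odd | exact: u_even].
have start_eg : start e = start g.
  by rewrite /start /lower em /= [(m.+1 < _)%N]ltn_neqAle m2k.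
by rewrite ue start_eg (IH g) // em /=; case: (odd m); rewrite ?cK.
Qed.

Local Notation M_odd := (pair_indep pair_odd).
Local Notation M_even := (pair_indep pair_even).

Definition alt_set (f0 f1 : bool) : {set E} :=
  [set e : E | odd e == (if lower e then f0 else f1)].

Lemma in_alt_set f0 f1 e :
  (e \in alt_set f0 f1) = (odd e == if lower e then f0 else f1).
Proof. by rewrite inE. Qed.

Lemma alt_set_common_basis f0 f1 : common_basis M_odd M_even (alt_set f0 f1).
Proof.
split.
  apply/(pair_basisP pair_oddK pair_odd_neq) => e; rewrite !in_alt_set.
  by rewrite odd_pair_odd lower_pair_odd; case: odd; case: lower; case: f0; case: f1.
apply/(pair_basisP pair_evenK pair_even_neq) => e; rewrite !in_alt_set.
by rewrite odd_pair_even lower_pair_even; case: odd; case: lower; case: f0; case: f1.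
Qed.

Lemma common_basis_alt_set S :
  common_basis M_odd M_even S -> S = alt_set (lo \notin S) (hi \notin S).
Proof.
case=> /(pair_basisP pair_oddK pair_odd_neq) S_odd.
move=> /(pair_basisP pair_evenK pair_even_neq) S_even.
have memS e : (e \in S) = if odd e then start e \notin S else start e \in S.
  apply: (@alternating _ negb (fun e => e \in S) negbK) => f.
  - by rewrite [f \in S]S_odd negbK.
  - by rewrite [f \in S]S_even negbK.
apply/setP => e; rewrite in_alt_set memS.
by rewrite /start; case: lower; case: odd; case: (lo \in S); case: (hi \in S).
Qed.

Definition heavy : seq E := [:: pos 1; pos 3; pos (2 * k)%N.+1].
Definition weight (e : E) : nat := e \in heavy.

Lemma weight_sum (V : nmodType) (F : E -> V) :
  \sum_e F e *+ weight e = F (pos 1) + F (pos 3) + F (pos (2 * k)%N.+1).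
Proof.
rewrite sum_mem_seq ?big_cons ?big_nil ?addr0 ?addrA //.
by rewrite /= !inE -!val_eqE /= !val_pos; lia.
Qed.

Lemma wset_alt_set f0 f1 : wset weight (alt_set f0 f1) = (f0.*2 + f1)%N.
Proof.
rewrite /wset big_mkcond.
rewrite (eq_bigr (fun e => (e \in alt_set f0 f1 : nat) *+ weight e)).
  rewrite weight_sum !in_alt_set /lower !val_pos; try lia.
  have -> : (1 < 2 * k)%N by lia.
  have -> : (3 < 2 * k)%N by lia.
  have -> : ((2 * k).+1 < 2 * k)%N = false by lia.
  by rewrite /= oddM; case: f0; case: f1.
by move=> e _; rewrite /weight; case: (_ \in alt_set _ _); case: (_ \in heavy).
Qed.

Lemma weight_one_common_basis S :
  common_basis M_odd M_even S -> wset weight S = 1%N -> S = alt_set false true.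
Proof.
move/common_basis_alt_set => ->; rewrite wset_alt_set.
by case: (lo \notin S); case: (hi \notin S).
Qed.

Lemma weighted_sum_complementary (u : E -> R) :
  (forall e, u (pair_odd e) = 1 - u e) -> (forall e, u (pair_even e) = 1 - u e) ->
  \sum_e (weight e)%:R * u e = (1 - u lo) *+ 2 + (1 - u hi).
Proof.
move=> u_odd u_even; under eq_bigr do rewrite mulr_natl.
rewrite weight_sum !(alternating (subKr 1) u_odd u_even (pos _)).
rewrite /start /lower !val_pos; try lia.
have -> : (1 < 2 * k)%N by lia.
have -> : (3 < 2 * k)%N by lia.
have -> : ((2 * k).+1 < 2 * k)%N = false by lia.
by rewrite /= oddM ltnn /= mulr2n.
Qed.

Lemma in_Q_complementary (u : E -> R) :
  in_Q M_odd M_even weight u ->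
  [/\ forall e, 0 <= u e, forall e, u (pair_odd e) = 1 - u e,
      forall e, u (pair_even e) = 1 - u e & (1 - u lo) *+ 2 + (1 - u hi) = 1].
Proof.
case=> /(pair_base_polytope pair_oddK pair_odd_neq) [u_ge0 u_odd].
move=> /(pair_base_polytope pair_evenK pair_even_neq) [_ u_even].
by rewrite weighted_sum_complementary.
Qed.

Definition xstar (e : E) : R := if lower e then 2^-1 else if odd e then 0 else 1.

Lemma xstar_lo : xstar lo = 2^-1.
Proof. by rewrite /xstar /lower /=; case: ifP => //; lia. Qed.

Lemma xstar_hi : xstar hi = 1.
Proof. by rewrite /xstar /lower val_pos ?ltnn ?oddM //; lia. Qed.

Lemma xstar_in_Q : in_Q M_odd M_even weight xstar.
Proof.
have xstarE e : xstar e = 2^-1 * chi R (alt_set false false) e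
                    + (1 - 2^-1) * chi R (alt_set true false) e.
  by rewrite /xstar /chi !in_alt_set; case: lower; case: odd => /=; lra.
have half_range : 0 <= (2^-1 : R) <= 1 by apply/andP; split; lra.
have [ff_odd ff_even] := alt_set_common_basis false false.
have [tf_odd tf_even] := alt_set_common_basis true false.
have xstar_odd := base_polytope_segment ff_odd tf_odd half_range xstarE.
have xstar_even := base_polytope_segment ff_even tf_even half_range xstarE.
split=> //.
have [_ xstar_odd_compl] := pair_base_polytope pair_oddK pair_odd_neq xstar_odd.
have [_ xstar_even_compl] := pair_base_polytope pair_evenK pair_even_neq xstar_even.
by rewrite weighted_sum_complementary // xstar_lo xstar_hi mulr2n; lra.
Qed.

Lemma xstar_vertex : is_vertex (in_Q M_odd M_even weight) xstar.
Proof.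
split=> [|y z t]; first exact: xstar_in_Q.
move=> /in_Q_complementary [y_ge0 y_odd y_even wy].
move=> /in_Q_complementary [z_ge0 z_odd z_even wz].
move=> /andP [t_gt0 t_lt1] xstarE.
(* xstar hi = 1 is the largest value allowed at hi, so y and z must attain it there;
   the weight constraint then pins down their common value at lo. *)
have y_hi_le1 : y hi <= 1 by have := y_ge0 (pair_odd hi); rewrite y_odd subr_ge0.
have z_hi_le1 : z hi <= 1 by have := z_ge0 (pair_odd hi); rewrite z_odd subr_ge0.
have [y_hi z_hi] : y hi = 1 /\ z hi = 1.
  by have := xstarE hi; rewrite xstar_hi; split; nra.
have y_lo : y lo = z lo by move: wy wz; rewrite y_hi z_hi !mulr2n; lra.
apply: functional_extensionality => e.
rewrite (alternating (subKr 1) y_odd y_even) (alternating (subKr 1) z_odd z_even).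
by rewrite /start; case: lower; rewrite ?y_lo ?y_hi ?z_hi.
Qed.

Lemma l1dist_xstar :
  l1dist xstar (chi R (alt_set false true)) = 3%:R * (4 * k)%:R / 4%:R.
Proof.
rewrite /l1dist (eq_bigr (fun e => if lower e then 2^-1 else 1)) => [|e _]; last first.
  rewrite /xstar /chi in_alt_set; case: lower; case: odd => /=.
  - by rewrite ger0_norm; lra.
  - by rewrite ler0_norm; lra.
  - by rewrite ler0_norm; lra.
  - by rewrite ger0_norm; lra.
by rewrite sum_halves -mulr_natr !natrM; lra.
Qed.

End Construction.

Theorem theorem20 (R : realType) :
  forall N : nat, exists n : nat, (N <= n)%N /\
    exists (I I' : {set {set 'I_n}}) (w : 'I_n -> nat) (xs : 'I_n -> R),
      [/\ is_matroid I, is_matroid I',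
          (forall e, (w e <= 1)%N),
          is_vertex (in_Q I I' w) xs &
          exists B : {set 'I_n},
            [/\ common_basis I I' B, wset w B = 1%N,
                (forall B' : {set 'I_n}, common_basis I I' B' -> wset w B' = 1%N -> B' = B) &
                l1dist xs (chi R B) = 3%:R * n%:R / 4%:R]].
Proof.
move=> N; have k_gt1 : (1 < N.+2)%N by [].
exists (4 * N.+2)%N; split; first by lia.
exists (pair_indep (@pair_odd N.+2)), (pair_indep (@pair_even N.+2)).
exists (weight k_gt1), (@xstar R N.+2).
split.
- exact: pair_indep_matroid pair_oddK pair_odd_neq.
- exact: pair_indep_matroid pair_evenK pair_even_neq.
- by move=> e; exact: leq_b1.
- exact: xstar_vertex.
exists (@alt_set N.+2 false true); split.
- exact: alt_set_common_basis.
- exact: wset_alt_set.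
- exact: weight_one_common_basis.
- exact: l1dist_xstar.
Qed.
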